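(* Let $T$ be an almost reduced linear trellis of length $n$, let $i\in\mathbb{Z}_n$ and $v,w\in V_i(T)$. If there exists a directed path in $T$ from $v$ to $w$, then there exists a directed path from $v$ to $w$ of length exactly $n$. In particular, if $T$ is connected and almost reduced, then for all $v,w\in V_0(T)$ there are paths of length $n$ from $v$ to $w$ and from $w$ to $v$.
   Context: Let $\mathbb{F}$ be a finite field and $n\ge1$; indices are taken in $\mathbb{Z}_n$. A trellis $T$ of length $n$ over $\mathbb{F}$ consists of pairwise disjoint finite vertex sets $V_i(T)$, $i\in\mathbb{Z}_n$, and edge sets $E_i(T)\subseteq V_i(T)\times\mathbb{F}\times V_{i+1}(T)$; $(v,\alpha,w)\in E_i(T)$ is an edge from $v$ to $w$. Trellises are trim. $T$ is linear if each $V_i(T)$ is an $\mathbb{F}$-vector space and each $E_i(T)$ a subspace. A path of length $m$ is $v_0\alpha_0v_1\cdots\alpha_{m-1}v_m$ with each $(v_j,\alpha_j,v_{j+1})$ an edge. A cycle is a closed path of length $n$ starting in $V_0(T)$; $T$ is almost reduced if every vertex lies on some cycle (equivalently, every vertex lies on a closed path of length $n$); connected if for any two distinct vertices $v,w$ there is a directed path from $v$ to $w$. *)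

From HB Require Import structures.
From mathcomp Require Import all_boot all_order all_algebra all_field.
Set Implicit Arguments. Unset Strict Implicit. Unset Printing Implicit Defensive.
Import GRing.Theory.
Local Open Scope ring_scope.

(* A trellis of length n over F whose vertex spaces are finite-dimensional
   F-vector spaces V_i = F^(dim i), indexed by i : 'I_n = Z_n (successor
   ordS i = i+1 mod n).
   Vertices of T are tagged pairs (i, v) with v in V_i, so the V_i are
   pairwise disjoint by construction. *)
Record trellis (F : finFieldType) (n : nat) := Trellis {
  tdim : 'I_n -> nat;
  tedge : forall i : 'I_n, 'rV[F]_(tdim i) -> F -> 'rV[F]_(tdim (ordS i)) -> bool
}.

Section Trellis.
Variables (F : finFieldType) (n : nat) (T : trellis F n).

Definition vertex := {i : 'I_n & 'rV[F]_(tdim T i)}.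

Definition linear_trellis : Prop :=
  forall i : 'I_n,
    @tedge _ _ T i 0 0 0 /\
    (forall (c : F) v a w v' a' w',
       @tedge _ _ T i v a w -> @tedge _ _ T i v' a' w' ->
       @tedge _ _ T i (c *: v + v') (c * a + a') (c *: w + w')).

Inductive tpath : nat -> vertex -> vertex -> Prop :=
| tpath0 x : tpath 0 x x
| pathS m (i : 'I_n) (v : 'rV[F]_(tdim T i)) (a : F)
        (w : 'rV[F]_(tdim T (ordS i))) y :
    @tedge _ _ T i v a w ->
    tpath m (existT _ (ordS i) w) y ->
    tpath m.+1 (existT _ i v) y.

Definition trim : Prop :=
  forall x : vertex, (exists y, tpath 1 x y) /\ (exists y, tpath 1 y x).

Definition almost_reduced : Prop := forall x : vertex, tpath n x x.

Definition tconnected : Prop :=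
  forall x y : vertex, x <> y -> exists m, tpath m x y.

End Trellis.
Arguments tpath {F n} T _ _ _.
Arguments vertex {F n} T.
Arguments tedge {F n} t i _ _ _.

From HB Require Import structures.
From mathcomp Require Import all_boot all_order all_algebra all_field.
From Stdlib Require Import Eqdep_dec.
Set Implicit Arguments.
Import GRing.Theory.

(* A path from V_i back to V_i winds around the cycle Z_n, so its length is a
   multiple k n of n.  Cutting off its first n steps gives paths v -> u and
   u -> w, the latter of length (k-1) n, hence of length n by induction.  By
   linearity, adding the paths v -> u and u -> w and subtracting a closed path
   u -> u of length n (which exists since T is almost reduced) yields a path
   v -> w of length n. *)

Section Paths.
Variables (F : finFieldType) (n : nat) (T : trellis F n).

Lemma vertex_inj (i : 'I_n) (v w : 'rV[F]_(tdim T i)) :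
  existT (fun k => 'rV[F]_(tdim T k)) i v = existT _ i w -> v = w.
Proof. by apply: inj_pair2_eq_dec => j k; apply: decP eqP. Qed.

Lemma tpath0_eq x y : tpath T 0 x y -> x = y.
Proof. by move=> p; inversion p. Qed.

Lemma tpathSE m i v y : tpath T m.+1 (existT _ i v) y ->
  exists a u, tedge T i v a u /\ tpath T m (existT _ (ordS i) u) y.
Proof.
move Ex: (existT _ i v) => x; move Em: m.+1 => k p.
case: p Ex Em => // k' i' v' a w z e p E [Ek]; subst k'.
have /= ei := f_equal (@projT1 _ _) E; subst i'.
by move/vertex_inj: E => ->; exists a, w.
Qed.

Lemma tpath_split a b x y : tpath T (a + b) x y ->
  exists2 z, tpath T a x z & tpath T b z y.
Proof.
elim: a x => [|a IHa] [i v] p; first by exists (existT _ i v) => //; constructor.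
have [c [u [e p']]] := tpathSE p.
have [z pa pb] := IHa _ p'.
by exists z => //; apply: pathS e pa.
Qed.

Lemma tpath_index m x y : tpath T m x y ->
  val (projT1 y) = (val (projT1 x) + m) %% n.
Proof.
elim=> [[i v] | k i v a w z _ _ IH] /=; first by rewrite addn0 modn_small.
rewrite IH /= -addSnnS.
by case: n i {v a w IH} => [[]|n'] i //=; rewrite modnDml.
Qed.

Lemma tpath_closed_length m i (v w : 'rV[F]_(tdim T i)) :
  tpath T m (existT _ i v) (existT _ i w) -> n %| m.
Proof.
move/tpath_index => /= idx.
have : i + m == i + 0 %[mod n] by rewrite -idx addn0 modn_small.
by rewrite eqn_modDl mod0n.
Qed.

Hypothesis linT : linear_trellis T.

Lemma tpath_lin (c : F) m i j v v' w w' :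
  tpath T m (existT _ i v) (existT _ j w) ->
  tpath T m (existT _ i v') (existT _ j w') ->
  tpath T m (existT _ i (c *: v + v')%R) (existT _ j (c *: w + w')%R).
Proof.
elim: m i v v' => [|m IH] i v v' p p'.
  move/tpath0_eq: p => E; have /= ej := f_equal (@projT1 _ _) E; subst j.
  move/vertex_inj: E => <-.
  by move/tpath0_eq/vertex_inj: p' => <-; constructor.
have [a [u [e p1]]] := tpathSE p.
have [a' [u' [e' p1']]] := tpathSE p'.
exact: pathS ((linT i).2 c _ _ _ _ _ _ e e') (IH _ _ _ p1 p1').
Qed.

Hypothesis arT : almost_reduced T.

Lemma tpath_n_trans i (v u w : 'rV[F]_(tdim T i)) :
  tpath T n (existT _ i v) (existT _ i u) ->
  tpath T n (existT _ i u) (existT _ i w) ->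
  tpath T n (existT _ i v) (existT _ i w).
Proof.
move=> vu uw.
have := tpath_lin (-1)%R (arT (existT _ i u)) (tpath_lin 1%R vu uw).
by rewrite !scale1r scaleN1r [(v + u)%R]addrC !addKr.
Qed.

Lemma tpath_muln_closed k i (v w : 'rV[F]_(tdim T i)) :
  tpath T (k * n) (existT _ i v) (existT _ i w) ->
  tpath T n (existT _ i v) (existT _ i w).
Proof.
elim: k v => [|k IHk] v p.
  by move/tpath0_eq/vertex_inj: p => ->; apply: arT.
rewrite mulSn in p; have [[j u] vu uw] := tpath_split _ _ p.
have ji : j = i.
  by apply: val_inj; rewrite (tpath_index vu) /= modnDr modn_small.
subst j; exact: tpath_n_trans vu (IHk u uw).
Qed.

Lemma tpath_closed_n m i (v w : 'rV[F]_(tdim T i)) :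
  tpath T m (existT _ i v) (existT _ i w) ->
  tpath T n (existT _ i v) (existT _ i w).
Proof.
move=> p; have /dvdnP[k def_m] := tpath_closed_length p.
by rewrite def_m in p; apply: tpath_muln_closed p.
Qed.

End Paths.

Theorem mainTheorem18 (F : finFieldType) (n : nat) (hn : 0 < n)
    (T : trellis F n) :
  linear_trellis T -> trim T -> almost_reduced T ->
  (forall (i : 'I_n) (v w : 'rV[F]_(tdim T i)),
      (exists m, tpath T m (existT _ i v) (existT _ i w)) ->
      tpath T n (existT _ i v) (existT _ i w)) /\
  (tconnected T ->
   forall v w : 'rV[F]_(tdim T (Ordinal hn)),
     tpath T n (existT _ (Ordinal hn) v) (existT _ (Ordinal hn) w) /\
     tpath T n (existT _ (Ordinal hn) w) (existT _ (Ordinal hn) v)).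
Proof.
move=> linT _ arT.
have tpath_n i v w : (exists m, tpath T m (existT _ i v) (existT _ i w)) ->
    tpath T n (existT _ i v) (existT _ i w).
  by case=> m; apply: tpath_closed_n.
split=> // connT v w.
have [->|vw] := eqVneq v w; first by split; apply: arT.
by split; apply: tpath_n; apply: connT => /vertex_inj wv; rewrite wv eqxx in vw.
Qed.
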